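(* If $K\colon\mathbb{E}(D)\to\mathbb{E}(D')$ is affine, then $\mathsf{D}K$ is linear, i.e. $\mathsf{D}K(\eta_1+\eta_2)=\mathsf{D}K(\eta_1)+\mathsf{D}K(\eta_2)$ and $\mathsf{D}K(\alpha\eta)=\alpha\,\mathsf{D}K(\eta)$ for all $\eta,\eta_1,\eta_2\in\mathbb{E}(D)$ and $\alpha\in[0,\infty)$.
   Context: $\mathbb{E}(D)$ is the set of functions $D\to[0,\infty]$ with pointwise order and pointwise operations, where $\infty+x=x+\infty=\infty$, $0\cdot\infty=0$, $r\cdot\infty=\infty$ for $r>0$; for $x\ge y$ in $[0,\infty]$, $x-y$ is the least $z\in[0,\infty]$ with $x=y+z$ (so $\infty-\infty=0$, $\infty-z=\infty$ for $z<\infty$). $K$ is affine if $K(\alpha\eta_1+(1-\alpha)\eta_2)=\alpha K(\eta_1)+(1-\alpha)K(\eta_2)$ for all $\eta_1,\eta_2$ and $\alpha\in[0,1]$. The linear part of $K$ is $(\mathsf{D}K)(\eta)=K(\eta)-K(\mathbb{O})$ (pointwise), where $\mathbb{O}$ is the constant zero function. *)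

From mathcomp Require Import all_boot all_order all_algebra.
From mathcomp Require Import all_classical reals constructive_ereal.
Set Implicit Arguments. Unset Strict Implicit. Unset Printing Implicit Defensive.
Import Order.TTheory GRing.Theory Num.Theory.
Local Open Scope ring_scope.
Local Open Scope ereal_scope.

Section Ext.
Variable R : realType.

Definition nninf := {x : \bar R | 0 <= x}.

Definition nnval (x : nninf) : \bar R := proj1_sig x.

Definition nnadd (x y : nninf) : nninf :=
  exist _ (nnval x + nnval y) (adde_ge0 (proj2_sig x) (proj2_sig y)).

(* scalar multiplication by a real a >= 0 (ereal: 0 * +oo = 0, r * +oo = +oo for r > 0) *)
Definition nnscale (a : R) (ha : (0 <= a)%R) (x : nninf) : nninf :=
  exist _ (a%:E * nnval x) (mule_ge0 (ha : 0 <= a%:E) (proj2_sig x)).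

(* x - y: for x >= y, the least z with x = y + z (oo - oo = 0, oo - z = oo);
   extended to x < y by truncation at 0 (never used when x >= y). *)
Definition nnsub_val (x y : \bar R) : \bar R :=
  if y == +oo then 0 else maxe (x - y) 0.

Lemma nnsub_ge0 (x y : \bar R) : 0 <= nnsub_val x y.
Proof. rewrite /nnsub_val; case: ifP => _ //; by rewrite le_max lexx orbT. Qed.

Definition nnsub (x y : nninf) : nninf :=
  exist _ (nnsub_val (nnval x) (nnval y)) (nnsub_ge0 _ _).

Definition nnzero : nninf := exist _ 0 (lexx 0).

Definition EE (D : Type) := D -> nninf.
Definition Eadd D (f g : EE D) : EE D := fun d => nnadd (f d) (g d).
Definition Escale D (a : R) (ha : (0 <= a)%R) (f : EE D) : EE D :=
  fun d => nnscale ha (f d).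
Definition Esub D (f g : EE D) : EE D := fun d => nnsub (f d) (g d).
Definition Ezero D : EE D := fun _ => nnzero.

Lemma onem_nneg (a : R) : (a <= 1)%R -> (0 <= 1 - a)%R.
Proof. by rewrite subr_ge0. Qed.

Definition affine D D' (K : EE D -> EE D') : Prop :=
  forall (e1 e2 : EE D) (a : R) (ha0 : (0 <= a)%R) (ha1 : (a <= 1)%R),
    K (Eadd (Escale ha0 e1) (Escale (onem_nneg ha1) e2)) =
    Eadd (Escale ha0 (K e1)) (Escale (onem_nneg ha1) (K e2)).

Definition linpart D D' (K : EE D -> EE D') : EE D -> EE D' :=
  fun e => Esub (K e) (K (@Ezero D)).

End Ext.

From mathcomp Require Import all_boot all_order all_algebra.
From mathcomp Require Import all_classical reals constructive_ereal.
From mathcomp Require Import ring lra.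
Set Implicit Arguments. Unset Strict Implicit. Unset Printing Implicit Defensive.
Import Order.TTheory GRing.Theory Num.Theory.
Local Open Scope ring_scope.

(* Fix a point d' of D' and look at k(eta) := K(eta)(d'), an affine map into
   [0, oo].  Writing eta = a (eta / a) + (1 - a) O shows k(eta) >= (1 - a) k(O)
   for every a in (0, 1), hence k(eta) >= k(O).  If k(O) = oo the linear part
   vanishes; otherwise it is k - k(O), again affine, and it vanishes at O.  An
   affine map vanishing at O is positively homogeneous (for a > 1 use
   eta = a^-1 (a eta)) and additive (eta1 + eta2 = 1/2 (2 eta1) + 1/2 (2 eta2)). *)

Section ExtendedCone.
Variables (R : realType) (D : Type).
Local Open Scope ereal_scope.
Local Notation E0 := (@Ezero R D).

Lemma EE_ext (f g : EE R D) : (forall d, nnval (f d) = nnval (g d)) -> f = g.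
Proof. by move=> fg; apply: funext => d; apply: val_inj; exact: fg. Qed.

Lemma Eaddr0 (e : EE R D) : Eadd e E0 = e.
Proof. by apply: EE_ext => d; rewrite /= adde0. Qed.

Lemma Escaler0 (a : R) (ha : (0 <= a)%R) : Escale ha E0 = E0.
Proof. by apply: EE_ext => d; rewrite /= mule0. Qed.

Lemma EscaleK (a b : R) (ha : (0 <= a)%R) (hb : (0 <= b)%R) (e : EE R D) :
  (a * b = 1)%R -> Escale ha (Escale hb e) = e.
Proof. by move=> ab; apply: EE_ext => d; rewrite /= muleA -EFinM ab mul1e. Qed.

Definition affine_fun (f : EE R D -> \bar R) : Prop :=
  forall (e1 e2 : EE R D) (a : R) (ha0 : (0 <= a)%R) (ha1 : (a <= 1)%R),
    f (Eadd (Escale ha0 e1) (Escale (onem_nneg ha1) e2)) =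
    a%:E * f e1 + (1 - a)%:E * f e2.

Section AffineFun.
Variables (f : EE R D -> \bar R) (f_affine : affine_fun f).

Lemma affine_fun_scale (a : R) (ha0 : (0 <= a)%R) (ha1 : (a <= 1)%R) e :
  f (Escale ha0 e) = a%:E * f e + (1 - a)%:E * f E0.
Proof. by rewrite -f_affine Escaler0 Eaddr0. Qed.

Lemma ge0_affine_fun_min : (forall e, 0 <= f e) -> forall e, f E0 <= f e.
Proof.
move=> f_ge0 e; apply/lee_mul01Pr; first exact: f_ge0.
move=> t /andP[t_gt0 t_lt1].
have onemt_ge0 : (0 <= 1 - t)%R by lra.
have onemt_le1 : (1 - t <= 1)%R by lra.
have inv_ge0 : (0 <= (1 - t)^-1)%R by rewrite invr_ge0.
have e_eq : e = Escale onemt_ge0 (Escale inv_ge0 e).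
  by rewrite EscaleK // mulfV // gt_eqF // subr_gt0.
rewrite e_eq (affine_fun_scale _ onemt_le1) (_ : 1 - (1 - t) = t)%R; last by ring.
by rewrite leeDr // mule_ge0 ?lee_fin.
Qed.

Hypothesis f_E0 : f E0 = 0.

Lemma affine_fun0_scale (a : R) (ha : (0 <= a)%R) e :
  f (Escale ha e) = a%:E * f e.
Proof.
have [a_le1|a_gt1] := leP a 1%R.
  by rewrite affine_fun_scale // f_E0 mule0 adde0.
have a_gt0 : (0 < a)%R by lra.
have inv_ge0 : (0 <= a^-1)%R by rewrite invr_ge0.
have inv_le1 : (a^-1 <= 1)%R by rewrite invf_le1 // ltW.
have e_eq : e = Escale inv_ge0 (Escale ha e) by rewrite EscaleK // mulVf ?gt_eqF.
rewrite {2}e_eq (affine_fun_scale _ inv_le1) f_E0 mule0 adde0 muleA -EFinM.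
by rewrite mulfV ?gt_eqF // mul1e.
Qed.

Lemma affine_fun0_add e1 e2 : f (Eadd e1 e2) = f e1 + f e2.
Proof.
have h2 : (0 <= 2 :> R)%R by [].
have h0 : (0 <= 2^-1 :> R)%R by rewrite invr_ge0.
have h1 : (2^-1 <= 1 :> R)%R by rewrite invf_le1 // ler1n.
have half2 : (2^-1 * 2 = 1 :> R)%R by field.
have onem_half2 : ((1 - 2^-1) * 2 = 1 :> R)%R by field.
rewrite -{1}(EscaleK h0 h2 e1 half2) -{1}(EscaleK (onem_nneg h1) h2 e2 onem_half2).
by rewrite f_affine !affine_fun0_scale !muleA -!EFinM half2 onem_half2 !mul1e.
Qed.

End AffineFun.

Lemma conv_subr (a : R) (x y z : \bar R) : z \is a fin_num ->
  a%:E * x + (1 - a)%:E * y - z = a%:E * (x - z) + (1 - a)%:E * (y - z).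
Proof.
case: z => [r| |] // _.
rewrite !muleBr ?fin_num_adde_defl // addeACA -oppeD // -!EFinM -EFinD.
by congr (_ - _%:E); ring.
Qed.

Lemma affine_funBr (f : EE R D -> \bar R) (x : \bar R) :
  affine_fun f -> x \is a fin_num -> affine_fun (fun e => f e - x).
Proof. by move=> f_affine x_fin e1 e2 a ha0 ha1; rewrite f_affine conv_subr. Qed.

Lemma nnsub_valxx (x : \bar R) : nnsub_val x x = 0.
Proof.
rewrite /nnsub_val; case: ifP => //; case: x => [r| |] // _.
- by rewrite subee // maxxx.
- by rewrite max_r // leNye.
Qed.

Lemma nnsub_valy (x : \bar R) : nnsub_val x +oo = 0.
Proof. by rewrite /nnsub_val eqxx. Qed.

Lemma nnsub_valE (x y : \bar R) : y \is a fin_num -> y <= x -> nnsub_val x y = x - y.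
Proof.
by case: y => [r| |] // _ r_le_x; rewrite /nnsub_val /= max_l // EFinN sube_ge0.
Qed.

Definition linpart_fun (f : EE R D -> \bar R) (e : EE R D) : \bar R :=
  nnsub_val (f e) (f E0).

Lemma affine_fun_linpart (f : EE R D -> \bar R) :
  affine_fun f -> (forall e, 0 <= f e) -> affine_fun (linpart_fun f).
Proof.
move=> f_affine f_ge0; rewrite /linpart_fun.
have := f_ge0 E0.
case: (f E0) (ge0_affine_fun_min f_affine f_ge0) => [r| |] // ge_r _.
- move=> e1 e2 a ha0 ha1; rewrite !nnsub_valE //.
  exact: affine_funBr.
- by move=> e1 e2 a ha0 ha1; rewrite !nnsub_valy !mule0 adde0.
Qed.

End ExtendedCone.

Lemma affine_fun_eval (R : realType) (D D' : Type) (K : EE R D -> EE R D') (d' : D') :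
  affine K -> affine_fun (fun e => nnval (K e d')).
Proof. by move=> K_affine e1 e2 a ha0 ha1; rewrite K_affine. Qed.

Theorem lemma3p2 (R : realType) (D D' : Type) (K : EE R D -> EE R D') :
  affine K ->
  (forall eta1 eta2 : EE R D,
     linpart K (Eadd eta1 eta2) = Eadd (linpart K eta1) (linpart K eta2)) /\
  (forall (alpha : R) (halpha : 0 <= alpha) (eta : EE R D),
     linpart K (Escale halpha eta) = Escale halpha (linpart K eta)).
Proof.
move=> K_affine.
pose k d' e := nnval (K e d').
have lin_affine d' : affine_fun (linpart_fun (k d')).
  exact: affine_fun_linpart (affine_fun_eval d' K_affine) (fun e => proj2_sig (K e d')).
have lin0 d' : linpart_fun (k d') (@Ezero R D) = 0%E by exact: nnsub_valxx.
split=> [e1 e2 | a ha e]; apply: EE_ext => d'.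
- exact: affine_fun0_add (lin_affine d') (lin0 d') e1 e2.
- exact: affine_fun0_scale (lin_affine d') (lin0 d') a ha e.
Qed.
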